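(* Let $r\ge2$, $d_1=1$, $\lambda_1=0$, $d_i\ge2$ integers and $\lambda_i>0$ for $i=2,\dots,r$, $n=\sum_id_i$. In $\mathbb R^{2r-1}$ with coordinates $(X_1,\dots,X_r,Y_2,\dots,Y_r)$ let $\mathcal L=\sum_{i=1}^rX_i^2+\sum_{i=2}^r\lambda_iY_i^2-1$, $\mathcal H=\sum_{i=1}^r\sqrt{d_i}X_i$, $\mathcal D=\{\mathcal L=0,\ \mathcal H=1\}\cap\{Y_i>0\ (i\ge2),\ |X_1-1|<\sqrt2\}$, and $$\hat{\mathscr F}=\frac{1-\frac{1}{n-1}(1-X_1)^2}{\prod_{i=2}^r\big(\sqrt{\lambda_i}\,Y_i\big)^{\frac{2d_i}{n-1}}}.$$ Then $\hat{\mathscr F}$, restricted to $\mathcal D$ (an open subset of the smooth submanifold $\{\mathcal L=0,\mathcal H=1\}$), has a unique critical point in $\mathcal D$, and this point is the global minimum point of $\hat{\mathscr F}$ on $\mathcal D$. *)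

From HB Require Import structures.
From mathcomp Require Import all_boot all_order all_algebra.
From mathcomp Require Import all_classical all_reals all_analysis.
Set Implicit Arguments. Unset Strict Implicit. Unset Printing Implicit Defensive.
Import Order.TTheory GRing.Theory Num.Theory.
Import numFieldNormedType.Exports.
Local Open Scope ring_scope.

(* Points of R^(2r-1) are row vectors p : 'rV[R]_(r + r.-1).
   The first block lsubmx p holds (X_1,...,X_r): X_{i+1} = lsubmx p 0 i, i : 'I_r.
   The second block rsubmx p holds (Y_2,...,Y_r): Y_{j+2} = rsubmx p 0 j, j : 'I_(r.-1).
   d, lam : nat -> _ are indexed as in the paper (d 1, ..., d r). *)

Section Defs.
Variable R : realType.

Definition Xc (r : nat) (p : 'rV[R]_(r + r.-1)) (i : 'I_r) : R := lsubmx p 0 i.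
Definition Yc (r : nat) (p : 'rV[R]_(r + r.-1)) (j : 'I_r.-1) : R := rsubmx p 0 j.

(* X_1 (the coordinate of index 0 in the first block; r >= 1 is assumed). *)
Definition X1 (r : nat) (p : 'rV[R]_(r + r.-1)) : R :=
  \sum_(i < r | val i == 0%N) Xc p i.

Definition ntot (r : nat) (d : nat -> nat) : nat := \sum_(1 <= i < r.+1) d i.

Definition Lfun (r : nat) (lam : nat -> R) (p : 'rV[R]_(r + r.-1)) : R :=
  \sum_(i < r) Xc p i ^+ 2 + \sum_(j < r.-1) lam j.+2 * Yc p j ^+ 2 - 1.

Definition Hfun (r : nat) (d : nat -> nat) (p : 'rV[R]_(r + r.-1)) : R :=
  \sum_(i < r) Num.sqrt (d i.+1)%:R * Xc p i.

Definition Ffun (r : nat) (d : nat -> nat) (lam : nat -> R)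
    (p : 'rV[R]_(r + r.-1)) : R :=
  let nm1 : R := (ntot r d)%:R - 1 in
  (1 - nm1^-1 * (1 - X1 p) ^+ 2) /
  \prod_(j < r.-1) (Num.sqrt (lam j.+2) * Yc p j) `^ (2 * (d j.+2)%:R / nm1).

Definition Dset (r : nat) (d : nat -> nat) (lam : nat -> R)
    (p : 'rV[R]_(r + r.-1)) : Prop :=
  [/\ Lfun lam p = 0, Hfun d p = 1, (forall j : 'I_r.-1, 0 < Yc p j)
    & `|X1 p - 1| < Num.sqrt 2].

(* Critical point of the restriction of F to the submanifold {L = 0, H = 1}:
   F is differentiable at p and dF_p vanishes on the tangent space
   ker dL_p /\ ker dH_p. *)
Definition crit_on_D (r : nat) (d : nat -> nat) (lam : nat -> R)
    (p : 'rV[R]_(r + r.-1)) : Prop :=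
  [/\ Dset d lam p, differentiable (Ffun d lam) p
    & forall v : 'rV[R]_(r + r.-1),
        'd (Lfun lam) p v = 0 -> 'd (Hfun d) p v = 0 -> 'd (Ffun d lam) p v = 0].

End Defs.

From HB Require Import structures.
From mathcomp Require Import all_boot all_order all_algebra.
From mathcomp Require Import all_classical all_reals all_analysis.
From mathcomp Require Import ring lra.
Set Implicit Arguments. Unset Strict Implicit. Unset Printing Implicit Defensive.
Import Order.TTheory GRing.Theory Num.Theory.
Import numFieldNormedType.Exports.
Local Open Scope ring_scope.

(* On D, Cauchy-Schwarz applied to the constraint H = 1 gives
   sum_i lam_i Y_i^2 <= 1 - X_1^2 - (1 - X_1)^2/(n-1) <= numerator of F.  The
   weighted AM-GM inequality with weights d_i/(n-1), applied to the ratios of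
   lam_i Y_i^2 to their values at the point X_1 = 0, X_i = sqrt d_i/(n-1),
   lam_i Y_i^2 = (n-2) d_i/(n-1)^2, bounds the denominator of F by a constant
   multiple of sum_i lam_i Y_i^2.  Both bounds are equalities at that point, which
   is therefore the global minimum.  Conversely, at a critical point
   dF = mu dL + nu dH for some multipliers (dL and dH are independent on D), and
   these Lagrange equations force the same values of the coordinates. *)

Section PointwiseDifferential.
Variables (R : realType) (V : normedModType R).
Implicit Types (f g df dg : V -> R) (x : V).

Lemma eq_is_diff f g df dg x : f =1 g -> df =1 dg ->
  is_diff x f df -> is_diff x g dg.
Proof. by move=> /funext <- /funext <-. Qed.

Lemma is_diff_const x (c : R) : is_diff x (fun _ => c) (fun _ => 0).
Proof. exact: is_diff_cst. Qed.

Lemma is_diff_add f g df dg x : is_diff x f df -> is_diff x g dg ->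
  is_diff x (fun q => f q + g q) (fun v => df v + dg v).
Proof. by move=> hf hg; exact: is_diffD. Qed.

Lemma is_diff_scale f df x c : is_diff x f df ->
  is_diff x (fun q => c * f q) (fun v => c * df v).
Proof. by move=> hf; exact: is_diffZ. Qed.

Lemma is_diff_mul f g df dg x : is_diff x f df -> is_diff x g dg ->
  is_diff x (fun q => f q * g q) (fun v => f x * dg v + g x * df v).
Proof. by move=> hf hg; exact: is_diffM. Qed.

Lemma is_diff_inv f df x : is_diff x f df -> f x != 0 ->
  is_diff x (fun q => (f q)^-1) (fun v => - (f x) ^- 2 * df v).
Proof.
move=> hf fx0; apply: DiffDef; first exact: differentiableV.
by rewrite diffV // diff_val.
Qed.

Lemma is_diff_powR f df x a : is_diff x f df -> 0 < f x ->
  is_diff x (fun q => f q `^ a) (fun v => a * f x `^ (a - 1) * df v).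
Proof.
move=> hf fx0; have hg := is_derive1_powR a fx0.
have dg : differentiable (fun y : R => y `^ a) (f x).
  by apply/derivable1_diffP; exact: ex_derive.
apply: DiffDef; first exact: (differentiable_comp _ dg).
rewrite (diff_comp _ dg) // diff1E // derive1E derive_val diff_val.
by apply/funext => v; rewrite /= /GRing.scale /= mulrC.
Qed.

Lemma is_diff_sum (I : Type) (s : seq I) (f df : I -> V -> R) x :
  (forall i, is_diff x (f i) (df i)) ->
  is_diff x (fun q => \sum_(i <- s) f i q) (fun v => \sum_(i <- s) df i v).
Proof.
move=> h; elim: s => [|i s IH].
  rewrite (_ : (fun q => _) = cst 0); last by apply/funext => q; rewrite big_nil.
  by apply: is_diff_eq; apply/funext => v; rewrite big_nil.
rewrite (_ : (fun q => _) = f i + fun q => \sum_(j <- s) f j q); last first.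
  by apply/funext => q; rewrite big_cons.
by apply: is_diff_eq; apply/funext => v; rewrite big_cons.
Qed.

Lemma is_diff_prod (I : Type) (s : seq I) (f df : I -> V -> R) x :
  (forall i, is_diff x (f i) (df i)) -> (forall i, f i x != 0) ->
  is_diff x (fun q => \prod_(i <- s) f i q)
    (fun v => (\prod_(i <- s) f i x) * \sum_(i <- s) df i v / f i x).
Proof.
move=> h f0; elim: s => [|i s IH].
  rewrite (_ : (fun q => _) = cst 1); last by apply/funext => q; rewrite big_nil.
  by apply: is_diff_eq; apply/funext => v; rewrite !big_nil mulr0.
rewrite (_ : (fun q => _) = f i * fun q => \prod_(j <- s) f j q); last first.
  by apply/funext => q; rewrite big_cons.
apply: is_diff_eq; apply/funext => v; rewrite !big_cons !fctE /GRing.scale /=.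
by have := f0 i; move: (f i x) => c c0; field.
Qed.

End PointwiseDifferential.

Lemma is_diff_row_coord (R : realType) n (k : 'I_n) (q : 'rV[R]_n) :
  is_diff q (fun p : 'rV[R]_n => p 0 k) (fun v => v 0 k).
Proof.
have @f : {linear 'rV[R]_n -> R}.
  by exists (fun p : 'rV[R]_n => p 0 k); do 2![eexists]; do ?[constructor];
     rewrite ?mxE// => ? *; rewrite ?mxE//; move=> ?; rewrite !mxE.
have fc : continuous f := @coord_continuous _ _ _ 0 k.
rewrite (_ : (fun p : 'rV[R]_n => p 0 k) = f) //.
by apply: DiffDef; [exact: linear_differentiable | exact: diff_lin].
Qed.

Lemma linear_lagrange (R : numFieldType) (V : lmodType R)
    (al be ph : {linear V -> R}) u w :
  al u = 1 -> be u = 0 -> al w = 0 -> be w = 1 ->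
  (forall v, al v = 0 -> be v = 0 -> ph v = 0) ->
  forall v, ph v = al v * ph u + be v * ph w.
Proof.
move=> au bu aw bw h v.
have := h (v - al v *: u - be v *: w); rewrite !linearB !linearZ /= au bu aw bw.
rewrite /GRing.scale /= => /(_ ltac:(ring) ltac:(ring)) h0.
by rewrite -[LHS]subr0 -h0; ring.
Qed.

Lemma sumr_mul_delta (R : pzRingType) (I : finType) (F : I -> R) (k : I) :
  \sum_i F i * (i == k)%:R = F k.
Proof.
by rewrite (bigD1 k) //= eqxx mulr1 big1 ?addr0 // => i /negbTE ->; rewrite mulr0.
Qed.

Lemma sum_mul_sqr_le (R : realFieldType) (I : finType) (a x : I -> R) :
  (\sum_i a i * x i) ^+ 2 <= (\sum_i a i ^+ 2) * \sum_i x i ^+ 2.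
Proof.
set A := \sum_i a i ^+ 2; set B := \sum_i a i * x i; set C := \sum_i x i ^+ 2.
have A0 : 0 <= A by apply: sumr_ge0 => i _; exact: sqr_ge0.
have [A00|Apos] := eqVneq A 0.
  have a0 i : a i = 0.
    apply/eqP; rewrite -sqrf_eq0; apply/eqP/(psumr_eq0P _ A00) => // j _.
    exact: sqr_ge0.
  by rewrite /B big1 ?expr0n ?A00 ?mul0r // => i _; rewrite a0 mul0r.
have : 0 <= \sum_i (A * x i - B * a i) ^+ 2 by apply: sumr_ge0 => i _; exact: sqr_ge0.
rewrite (eq_bigr (fun i => A ^+ 2 * x i ^+ 2 - 2 * A * B * (a i * x i)
  + B ^+ 2 * a i ^+ 2)); last by move=> i _; ring.
rewrite big_split sumrB /= -!mulr_sumr -/A -/B -/C.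
have Agt0 : 0 < A by rewrite lt_def Apos.
nra.
Qed.

Lemma prod_powR_le_sum (R : realType) (I : finType) (w y : I -> R) :
  (forall i, 0 <= w i) -> \sum_i w i = 1 -> (forall i, 0 < y i) ->
  \prod_i y i `^ w i <= \sum_i w i * y i.
Proof.
move=> w0 w1 y0; set A := \sum_i w i * y i.
have wy0 i : 0 <= w i * y i by rewrite mulr_ge0 // ltW.
have A0 : 0 < A.
  rewrite lt_def sumr_ge0 // andbT; apply/eqP => /(psumr_eq0P (fun i _ => wy0 i)) wy.
  suff : \sum_i w i = 0 by rewrite w1 => /eqP; rewrite oner_eq0.
  apply: big1 => i _; have /eqP := wy i isT.
  by rewrite mulf_eq0 (gt_eqF (y0 i)) orbF => /eqP.
have ln_le z : 0 < z -> ln z <= z - 1.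
  by move=> z0; have := @le_ln1Dx _ (z - 1); rewrite subrKC; apply; lra.
have lnA : \sum_i w i * ln (y i) <= ln A.
  have : \sum_i w i * (ln (y i) - ln A) <= \sum_i w i * (y i / A - 1).
    apply: ler_sum => i _; rewrite ler_wpM2l // -ln_div ?posrE //.
    exact/ln_le/divr_gt0.
  rewrite [leRHS](eq_bigr (fun i => w i * y i / A - w i)); last by move=> i _; ring.
  rewrite sumrB -mulr_suml -/A divff ?gt_eqF // w1 subrr.
  rewrite (eq_bigr (fun i => w i * ln (y i) - w i * ln A)); last by move=> i _; ring.
  by rewrite sumrB -mulr_suml w1 mul1r subr_le0.
rewrite -[A]lnK ?posrE // (eq_bigr (fun i => expR (w i * ln (y i)))); last first.
  by move=> i _; rewrite /powR gt_eqF.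
by rewrite -expR_sum ler_expR.
Qed.

(* The Lagrange system once X_{j+2} = t sqrt d_j and lam_j Y_j^2 = k d_j are known;
   here m = n - 1 and x = X_1. *)
Lemma lagrange_system_sol (R : realFieldType) (m x t k : R) :
  2 <= m -> 0 < 1 - t ^+ 2 * m -> x + t * m = 1 ->
  x ^+ 2 + t ^+ 2 * m + k * m = 1 -> (1 - x) * k = (1 - t ^+ 2 * m) * (t - x) ->
  [/\ x = 0, t = m^-1 & k = (m - 1) / m ^+ 2].
Proof.
move=> m2 N0 hH hL hX.
have m0 : m != 0 by rewrite gt_eqF // (lt_le_trans _ m2).
have x1t : x * (1 - t) = 0.
  have -> : x * (1 - t) = ((1 - x) * k - (1 - t ^+ 2 * m) * (t - x))
     - t * (x ^+ 2 + t ^+ 2 * m + k * m - 1) + (k + x * t) * (x + t * m - 1) by ring.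
  by rewrite hX hL hH !subrr mulr0 subr0 mulr0 addr0.
have t1 : t != 1.
  apply: contraTneq N0 => ->; rewrite expr1n mul1r subr_gt0 -leNgt.
  by rewrite (le_trans _ m2) ?ler1n.
have x0 : x = 0.
  by move: x1t => /eqP; rewrite mulf_eq0 subr_eq0 (eq_sym 1) (negbTE t1) orbF => /eqP.
have tm : t = m^-1 by apply: (mulIf m0); rewrite mulVf // -hH x0 add0r.
have km : k * m = 1 - x ^+ 2 - t ^+ 2 * m by rewrite -hL; ring.
by split=> //; apply: (mulIf m0); rewrite km x0 tm; field.
Qed.

(* The paper's r is r.+2 here; j : 'I_r.+1 stands for the paper's index j + 2, so
   X_{j+2} = xr q j, d_{j+2} = dY j and Y_{j+2} = Yc q j. *)
Section CriticalPoint.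
Variables (R : realType) (r : nat) (d : nat -> nat) (lam : nat -> R).
Hypotheses (hd1 : d 1%N = 1%N)
  (hd : forall i : nat, (2 <= i <= r.+2)%N -> (2 <= d i)%N)
  (hl : forall i : nat, (2 <= i <= r.+2)%N -> 0 < lam i).

Local Notation V := 'rV[R]_(r.+2 + r.+1).

Definition dY (j : 'I_r.+1) : R := (d j.+2)%:R.
Definition nm1 : R := \sum_j dY j.
Definition sdY (j : 'I_r.+1) : R := Num.sqrt (dY j).
Definition expY (j : 'I_r.+1) : R := 2 * dY j / nm1.

Definition x1 (q : V) : R := Xc q ord0.
Definition xr (q : V) (j : 'I_r.+1) : R := Xc q (lift ord0 j).
Definition Z (q : V) (j : 'I_r.+1) : R := Num.sqrt (lam j.+2) * Yc q j.
Definition Fnum (q : V) : R := 1 - nm1^-1 * (1 - x1 q) ^+ 2.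
Definition Fden (q : V) : R := \prod_j Z q j `^ expY j.

Lemma shift2_in_range (j : 'I_r.+1) : (2 <= j.+2 <= r.+2)%N.
Proof. by rewrite /= !ltnS -ltnS ltn_ord. Qed.

Lemma dY_ge2 j : 2 <= dY j.
Proof. by rewrite /dY (ler_nat R 2) hd ?shift2_in_range. Qed.

Lemma dY_gt0 j : 0 < dY j.
Proof. exact: lt_le_trans (dY_ge2 j). Qed.

Lemma lam_gt0 (j : 'I_r.+1) : 0 < lam j.+2.
Proof. exact/hl/shift2_in_range. Qed.

Lemma nm1_ge2 : 2 <= nm1.
Proof.
rewrite /nm1 big_ord_recl -[2]addr0 lerD ?dY_ge2 //.
by apply: sumr_ge0 => i _; exact: ltW (dY_gt0 _).
Qed.

Lemma nm1_gt0 : 0 < nm1.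
Proof. exact: lt_le_trans nm1_ge2. Qed.

Lemma expY_gt0 j : 0 < expY j.
Proof. by rewrite /expY divr_gt0 ?mulr_gt0 ?dY_gt0 ?nm1_gt0. Qed.

Lemma sum_sdY2 : \sum_j sdY j ^+ 2 = nm1.
Proof. by apply: eq_bigr => j _; rewrite sqr_sqrtr // ltW ?dY_gt0. Qed.

Lemma ntotE : (ntot r.+2 d)%:R - 1 = nm1 :> R.
Proof.
rewrite /ntot big_add1 /= big_nat_recl // hd1 big_mkord natrD natr_sum.
by rewrite addrC addKr.
Qed.

Lemma X1E q : X1 q = x1 q.
Proof. by rewrite /X1 big_mkcond big_ord_recl /= big1 ?addr0. Qed.

Lemma Z_sqr q j : Z q j ^+ 2 = lam j.+2 * Yc q j ^+ 2.
Proof. by rewrite /Z exprMn sqr_sqrtr // ltW ?lam_gt0. Qed.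

Lemma Z_gt0 q j : 0 < Yc q j -> 0 < Z q j.
Proof. by move=> h; rewrite /Z mulr_gt0 // sqrtr_gt0 lam_gt0. Qed.

Lemma Fden_gt0 q : (forall j, 0 < Yc q j) -> 0 < Fden q.
Proof. by move=> h; apply: prodr_gt0 => j _; exact/powR_gt0/Z_gt0. Qed.

Lemma Fnum_gt0 q : `|x1 q - 1| < Num.sqrt 2 -> 0 < Fnum q.
Proof.
move=> h; have m2 := nm1_ge2; have m0 := nm1_gt0.
have u2 : (1 - x1 q) ^+ 2 < 2.
  rewrite -sqrrN opprB -real_normK ?num_real // -[X in _ < X]sqr_sqrtr // ?ler0n.
  by rewrite ltr_pXn2r // ?nnegrE ?sqrtr_ge0.
rewrite /Fnum subr_gt0 mulrC ltr_pdivrMr //; lra.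
Qed.

Lemma LfunE q : Lfun lam q =
  x1 q ^+ 2 + \sum_j xr q j ^+ 2 + \sum_j Z q j ^+ 2 - 1.
Proof.
rewrite /Lfun big_ord_recl; congr (_ + _ + _ - _).
by apply: eq_bigr => j _; rewrite Z_sqr.
Qed.

Lemma HfunE q : Hfun d q = x1 q + \sum_j sdY j * xr q j.
Proof. by rewrite /Hfun big_ord_recl /= hd1 sqrtr1 mul1r. Qed.

Lemma FfunE q : Ffun d lam q = Fnum q / Fden q.
Proof. by rewrite /Ffun ntotE X1E. Qed.

Lemma is_diff_Xc i (q : V) : is_diff q (fun p : V => Xc p i) (fun v => Xc v i).
Proof.
rewrite (_ : (fun p : V => Xc p i) = fun p => p 0 (lshift r.+1 i)).
  exact: is_diff_row_coord.
by apply/funext => p; rewrite /Xc mxE.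
Qed.

Lemma is_diff_Yc j (q : V) : is_diff q (fun p : V => Yc p j) (fun v => Yc v j).
Proof.
rewrite (_ : (fun p : V => Yc p j) = fun p => p 0 (rshift r.+2 j)).
  exact: is_diff_row_coord.
by apply/funext => p; rewrite /Yc mxE.
Qed.

Definition dLfun (q v : V) : R :=
  2 * (\sum_i Xc q i * Xc v i + \sum_(j < r.+1) lam j.+2 * Yc q j * Yc v j).

Definition dFfun (q v : V) : R := (Fden q)^-1 *
  (2 / nm1 * (1 - x1 q) * x1 v - Fnum q * \sum_j expY j / Yc q j * Yc v j).

Lemma is_diff_Lfun q : is_diff q (Lfun lam) (dLfun q).
Proof.
have hX i := is_diff_mul (is_diff_Xc i q) (is_diff_Xc i q).
have hY (j : 'I_r.+1) :=
  is_diff_scale (lam j.+2) (is_diff_mul (is_diff_Yc j q) (is_diff_Yc j q)).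
have := is_diff_add (is_diff_add (is_diff_sum (index_enum _) hX)
  (is_diff_sum (index_enum _) hY)) (is_diff_const q (-1)).
apply: eq_is_diff => [p|v] /=.
  by rewrite /Lfun; congr (_ + _ - _); apply: eq_bigr => i _; rewrite expr2.
rewrite /dLfun addr0 mulrDr !mulr_sumr.
by congr (_ + _); apply: eq_bigr => i _; ring.
Qed.

Lemma is_diff_Hfun (q : V) : is_diff q (Hfun d) (Hfun d).
Proof.
have hX (i : 'I_r.+2) := is_diff_scale (Num.sqrt (d i.+1)%:R) (is_diff_Xc i q).
exact: eq_is_diff (is_diff_sum (index_enum _) hX).
Qed.

Lemma is_diff_Fnum q : is_diff q Fnum (fun v => 2 / nm1 * (1 - x1 q) * x1 v).
Proof.
have h1 := is_diff_add (is_diff_const q 1) (is_diff_scale (-1) (is_diff_Xc ord0 q)).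
apply: eq_is_diff (is_diff_add (is_diff_const q 1)
  (is_diff_scale (- nm1^-1) (is_diff_mul h1 h1))) => [p|v] /=.
  by rewrite /Fnum /x1; ring.
by rewrite /x1; ring.
Qed.

Lemma is_diff_Fden q : (forall j, 0 < Yc q j) ->
  is_diff q Fden (fun v => Fden q * \sum_j expY j / Yc q j * Yc v j).
Proof.
move=> hY.
have hZ j := is_diff_powR (expY j)
  (is_diff_scale (Num.sqrt (lam j.+2)) (is_diff_Yc j q)) (Z_gt0 (hY j)).
apply: eq_is_diff (is_diff_prod (index_enum _) hZ _) => [//|v|j]; last first.
  by rewrite gt_eqF // powR_gt0 // Z_gt0.
congr (_ * _); apply: eq_bigr => j _.
have Zq := Z_gt0 (hY j); have Ze := powR_gt0 (expY j) Zq.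
rewrite -/(Z q j) powRB ?(gt_eqF Zq) ?implybT // powRr1 ?(ltW Zq) //.
move: Zq Ze; rewrite /Z => Zq Ze.
have sl : Num.sqrt (lam j.+2) != 0 by rewrite gt_eqF // sqrtr_gt0 lam_gt0.
by field; rewrite sl !gt_eqF.
Qed.

Lemma is_diff_Ffun q : (forall j, 0 < Yc q j) -> is_diff q (Ffun d lam) (dFfun q).
Proof.
move=> hY; have P0 : Fden q != 0 by rewrite gt_eqF ?Fden_gt0.
apply: eq_is_diff (is_diff_mul (is_diff_Fnum q) (is_diff_inv (is_diff_Fden hY) P0))
  => [p|v] /=; first by rewrite FfunE.
by rewrite /dFfun; field; rewrite P0 gt_eqF ?nm1_gt0.
Qed.

Definition vec (c1 : R) (cx cy : 'I_r.+1 -> R) : V :=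
  row_mx (\row_i (if unlift ord0 i is Some j then cx j else c1)) (\row_j cy j).

Lemma x1_vec c1 cx cy : x1 (vec c1 cx cy) = c1.
Proof. by rewrite /x1 /Xc /vec row_mxKl mxE unlift_none. Qed.

Lemma xr_vec c1 cx cy j : xr (vec c1 cx cy) j = cx j.
Proof. by rewrite /xr /Xc /vec row_mxKl mxE liftK. Qed.

Lemma Yc_vec c1 cx cy j : Yc (vec c1 cx cy) j = cy j.
Proof. by rewrite /Yc /vec row_mxKr mxE. Qed.

Lemma vec_eta (q : V) : q = vec (x1 q) (xr q) (Yc q).
Proof.
rewrite -[q in LHS]hsubmxK /vec; congr row_mx; apply/rowP => i; rewrite !mxE //.
  by case: unliftP => [j ->|->]; rewrite /xr /x1 /Xc mxE.
by rewrite /Yc mxE.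
Qed.

Lemma dLfun_vec q c1 cx cy : dLfun q (vec c1 cx cy) =
  2 * (x1 q * c1 + \sum_j xr q j * cx j + \sum_(j < r.+1) lam j.+2 * Yc q j * cy j).
Proof.
rewrite /dLfun big_ord_recl; congr (2 * (_ * _ + _ + _)); first exact: x1_vec.
  by apply: eq_bigr => j _; congr (_ * _); exact: xr_vec.
by apply: eq_bigr => j _; rewrite Yc_vec.
Qed.

Lemma Hfun_vec c1 cx cy : Hfun d (vec c1 cx cy) = c1 + \sum_j sdY j * cx j.
Proof.
by rewrite HfunE x1_vec; congr (_ + _); apply: eq_bigr => j _; rewrite xr_vec.
Qed.

Lemma dFfun_vec q c1 cx cy : dFfun q (vec c1 cx cy) = (Fden q)^-1 *
  (2 / nm1 * (1 - x1 q) * c1 - Fnum q * \sum_j expY j / Yc q j * cy j).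
Proof.
rewrite /dFfun x1_vec; congr (_ * (_ - _ * _)).
by apply: eq_bigr => j _; rewrite Yc_vec.
Qed.

Definition kcrit : R := (nm1 - 1) / nm1 ^+ 2.
Definition Ycrit (j : 'I_r.+1) : R := Num.sqrt (kcrit * dY j / lam j.+2).
Definition pcrit : V := vec 0 (fun j => sdY j / nm1) Ycrit.

Lemma kcrit_gt0 : 0 < kcrit.
Proof. by rewrite divr_gt0 ?exprn_gt0 ?nm1_gt0 //; have := nm1_ge2; lra. Qed.

Lemma Ycrit_gt0 j : 0 < Ycrit j.
Proof. by rewrite sqrtr_gt0 divr_gt0 ?lam_gt0 // mulr_gt0 ?kcrit_gt0 ?dY_gt0. Qed.

Lemma Yc_pcrit_gt0 j : 0 < Yc pcrit j.
Proof. by rewrite Yc_vec Ycrit_gt0. Qed.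

Lemma lam_Ycrit2 (j : 'I_r.+1) : lam j.+2 * Ycrit j ^+ 2 = kcrit * dY j.
Proof.
rewrite sqr_sqrtr; last by rewrite ltW // -sqrtr_gt0 Ycrit_gt0.
by field; rewrite gt_eqF ?lam_gt0.
Qed.

Lemma Fnum_pcrit : Fnum pcrit = kcrit * nm1.
Proof.
by rewrite /Fnum x1_vec /kcrit subr0 expr1n mulr1; field; rewrite gt_eqF ?nm1_gt0.
Qed.

Lemma Dset_pcrit : Dset d lam pcrit.
Proof.
have m0 : nm1 != 0 by rewrite gt_eqF ?nm1_gt0.
split.
- have sx : \sum_j xr pcrit j ^+ 2 = nm1^-1.
    rewrite (eq_bigr (fun j => sdY j ^+ 2 / nm1 ^+ 2)) => [|j _]; last first.
      by rewrite xr_vec expr_div_n.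
    by rewrite -mulr_suml sum_sdY2; field.
  have sz : \sum_j Z pcrit j ^+ 2 = kcrit * nm1.
    by rewrite mulr_sumr; apply: eq_bigr => j _; rewrite Z_sqr Yc_vec lam_Ycrit2.
  by rewrite LfunE x1_vec sx sz /kcrit; field.
- rewrite Hfun_vec add0r (eq_bigr (fun j => sdY j ^+ 2 / nm1)) => [|j _].
    by rewrite -mulr_suml sum_sdY2 divff.
  by rewrite mulrA -expr2.
- exact: Yc_pcrit_gt0.
- by rewrite X1E x1_vec sub0r normrN normr1 -{1}sqrtr1 ltr_sqrt // ltr1n.
Qed.

Lemma dFfun_pcrit v : dFfun pcrit v =
  dLfun pcrit v * - (Fden pcrit)^-1 + Hfun d v * (2 / nm1 / Fden pcrit).
Proof.
have m0 : nm1 != 0 by rewrite gt_eqF ?nm1_gt0.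
rewrite [v]vec_eta dFfun_vec dLfun_vec Hfun_vec Fnum_pcrit !x1_vec.
have -> : \sum_j xr pcrit j * xr v j = nm1^-1 * \sum_j sdY j * xr v j.
  by rewrite mulr_sumr; apply: eq_bigr => j _; rewrite xr_vec mulrAC mulrC.
have -> : kcrit * nm1 * \sum_j expY j / Yc pcrit j * Yc v j =
    2 * \sum_(j < r.+1) lam j.+2 * Yc pcrit j * Yc v j.
  rewrite (mulr_sumr _ _ _ (kcrit * nm1)) (mulr_sumr _ _ _ 2).
  apply: eq_bigr => j _; rewrite Yc_vec /expY.
  have Y0 := Ycrit_gt0 j.
  have -> : lam j.+2 * Ycrit j = kcrit * dY j / Ycrit j.
    by rewrite -lam_Ycrit2; field; rewrite gt_eqF.
  by field; rewrite m0 gt_eqF.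
by field; rewrite m0 gt_eqF ?Fden_gt0 //; exact: Yc_pcrit_gt0.
Qed.

Lemma crit_on_D_pcrit : crit_on_D d lam pcrit.
Proof.
have [Fdiff dFE] := is_diff_Ffun Yc_pcrit_gt0.
have [_ dLE] := is_diff_Lfun pcrit; have [_ dHE] := is_diff_Hfun pcrit.
split=> [||v]; [exact: Dset_pcrit | exact: Fdiff |].
by rewrite dFE dLE dHE dFfun_pcrit => -> ->; ring.
Qed.

Lemma crit_on_D_lagrange q : crit_on_D d lam q ->
  exists mu nu, forall v, dFfun q v = dLfun q v * mu + Hfun d v * nu.
Proof.
case=> -[_ _ hY _] _ hc.
have [_ dLE] := is_diff_Lfun q; have [_ dHE] := is_diff_Hfun q.
have [_ dFE] := is_diff_Ffun hY.
have sum0 (F : 'I_r.+1 -> R) : \sum_j F j * 0 = 0 by rewrite big1 // => j _; rewrite mulr0.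
(* u, w is the basis dual to (dL, dH) on the span of the X_1- and Y_2-directions;
   this is where Y_2 > 0 is used. *)
pose e1 := vec 1 (fun=> 0) (fun=> 0).
pose u := (2 * (lam 2 * Yc q ord0))^-1 *: vec 0 (fun=> 0) (fun l => (l == ord0)%:R).
pose w := e1 - (2 * x1 q) *: u.
have Lu : 'd (Lfun lam) q u = 1.
  rewrite linearZ /= dLE dLfun_vec !sum0 sumr_mul_delta mulr0 !add0r /GRing.scale /=.
  by rewrite mulVf // gt_eqF // !mulr_gt0 // (lam_gt0 ord0).
have Hu : 'd (Hfun d) q u = 0.
  by rewrite linearZ /= dHE Hfun_vec sum0 addr0 /GRing.scale /= mulr0.
have Lw : 'd (Lfun lam) q w = 0.
  rewrite linearB linearZ /= Lu /GRing.scale /= mulr1 dLE dLfun_vec !sum0.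
  by rewrite !addr0 mulr1 subrr.
have Hw : 'd (Hfun d) q w = 1.
  by rewrite linearB linearZ /= Hu /GRing.scale /= mulr0 subr0 dHE Hfun_vec sum0 addr0.
exists ('d (Ffun d lam) q u), ('d (Ffun d lam) q w) => v.
by rewrite -dLE -dHE -dFE; exact: linear_lagrange Lu Hu Lw Hw hc v.
Qed.

Lemma lagrange_equations q (mu nu : R) :
  (forall v, dFfun q v = dLfun q v * mu + Hfun d v * nu) ->
  [/\ 2 / nm1 * (1 - x1 q) / Fden q = 2 * x1 q * mu + nu,
      forall j, 2 * xr q j * mu + sdY j * nu = 0
    & forall j, - (Fnum q / Fden q) * (expY j / Yc q j) = 2 * (lam j.+2 * Yc q j) * mu].
Proof.
have sum0 (F : 'I_r.+1 -> R) : \sum_j F j * 0 = 0 by rewrite big1 // => j _; rewrite mulr0.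
move=> h; split=> [|j|j].
- have := h (vec 1 (fun=> 0) (fun=> 0)); rewrite dFfun_vec dLfun_vec Hfun_vec !sum0.
  by rewrite !(mulr0, mulr1, addr0, add0r, subr0, sub0r, mul1r) mulrC.
- have := h (vec 0 (fun l => (l == j)%:R) (fun=> 0)).
  rewrite dFfun_vec dLfun_vec Hfun_vec !sum0 !sumr_mul_delta.
  by rewrite !(mulr0, addr0, add0r, sub0r) oppr0 mulr0 => <-.
- have := h (vec 0 (fun=> 0) (fun l => (l == j)%:R)).
  rewrite dFfun_vec dLfun_vec Hfun_vec !sum0 !sumr_mul_delta.
  by rewrite !(mulr0, addr0, add0r, subr0, sub0r) mul0r addr0 => <-; ring.
Qed.

Lemma lagrange_reduce q (mu nu : R) : (forall j, 0 < Yc q j) -> 0 < Fnum q ->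
  (forall v, dFfun q v = dLfun q v * mu + Hfun d v * nu) ->
  exists t k, [/\ forall j, xr q j = t * sdY j, forall j, Z q j ^+ 2 = k * dY j
                & (1 - x1 q) * k = Fnum q * (t - x1 q)].
Proof.
move=> hY N0 /lagrange_equations[eX1 eX eY].
have m0 : nm1 != 0 by rewrite gt_eqF ?nm1_gt0.
have P0 := Fden_gt0 hY.
have mu0 : mu != 0.
  apply/eqP => mu0; have /eqP := eY ord0; rewrite mu0 mulr0 mulNr oppr_eq0.
  by rewrite gt_eqF // mulr_gt0 // divr_gt0 ?expY_gt0.
exists (- nu / (2 * mu)), (- (Fnum q / Fden q) / (nm1 * mu)); split=> [j|j|].
- transitivity ((2 * xr q j * mu + sdY j * nu - sdY j * nu) / (2 * mu)).
    by field.
  by rewrite eX; field.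
- have Y0 := hY j; rewrite Z_sqr.
  transitivity (2 * (lam j.+2 * Yc q j) * mu * Yc q j / (2 * mu)); first by field.
  by rewrite -eY /expY; field; rewrite m0 mu0 !gt_eqF.
transitivity (- Fnum q / (2 * mu) * (2 / nm1 * (1 - x1 q) / Fden q)).
  by field; rewrite m0 mu0 gt_eqF.
by rewrite eX1; field.
Qed.

Lemma lagrange_eq_pcrit q (mu nu : R) : Dset d lam q ->
  (forall v, dFfun q v = dLfun q v * mu + Hfun d v * nu) -> q = pcrit.
Proof.
move=> [hL hH hY hX] hmu.
have N0 : 0 < Fnum q by apply: Fnum_gt0; rewrite -X1E.
have [t [k [hx hZ hX1]]] := lagrange_reduce hY N0 hmu.
have hHt : x1 q + t * nm1 = 1.
  rewrite -hH HfunE -sum_sdY2 mulr_sumr; congr (_ + _); apply: eq_bigr => j _.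
  by rewrite hx; ring.
have hLt : x1 q ^+ 2 + t ^+ 2 * nm1 + k * nm1 = 1.
  have sx : \sum_j xr q j ^+ 2 = t ^+ 2 * nm1.
    by rewrite -sum_sdY2 mulr_sumr; apply: eq_bigr => j _; rewrite hx; ring.
  have sz : \sum_j Z q j ^+ 2 = k * nm1.
    by rewrite mulr_sumr; apply: eq_bigr => j _; rewrite hZ.
  by apply/eqP; rewrite -subr_eq0 -sx -sz -LfunE hL.
have Nt : Fnum q = 1 - t ^+ 2 * nm1.
  by rewrite /Fnum -hHt; field; rewrite gt_eqF ?nm1_gt0.
have [x10 tm km] : [/\ x1 q = 0, t = nm1^-1 & k = kcrit].
  by apply: lagrange_system_sol nm1_ge2 _ hHt hLt _; rewrite -Nt.
rewrite [q]vec_eta x10; congr vec; apply/funext => j; first by rewrite hx tm mulrC.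
have Y0 := hY j.
by rewrite /Ycrit -km -hZ Z_sqr mulrC mulKf ?gt_eqF ?lam_gt0 // sqrtr_sqr gtr0_norm.
Qed.

Lemma crit_on_D_eq_pcrit q : crit_on_D d lam q -> q = pcrit.
Proof.
move=> hq; have [mu [nu hmu]] := crit_on_D_lagrange hq.
by case: hq => hD _ _; exact: lagrange_eq_pcrit hD hmu.
Qed.

Lemma sum_Z2_le_Fnum q : Dset d lam q -> \sum_j Z q j ^+ 2 <= Fnum q.
Proof.
case=> hL hH _ _; have m0 := nm1_gt0.
have hs : \sum_j sdY j * xr q j = 1 - x1 q by rewrite -hH HfunE addrC addKr.
have := sum_mul_sqr_le sdY (xr q); rewrite hs sum_sdY2 => cs.
have : (1 - x1 q) ^+ 2 / nm1 <= \sum_j xr q j ^+ 2 by rewrite ler_pdivrMr // mulrC.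
move: hL; rewrite LfunE /Fnum => hL; have := sqr_ge0 (x1 q); rewrite mulrC; lra.
Qed.

Lemma Fden_le q : (forall j, 0 < Yc q j) ->
  Fden q <= Fden pcrit * (\sum_j Z q j ^+ 2) / Fnum pcrit.
Proof.
move=> hY.
have Zp j : 0 < Z pcrit j by rewrite Z_gt0 // Yc_pcrit_gt0.
pose y j := (Z q j / Z pcrit j) ^+ 2.
(* Fden q / Fden pcrit is the geometric mean of the y j with weights d_j/(n-1). *)
have -> : Fden q = Fden pcrit * \prod_j y j `^ (dY j / nm1).
  rewrite /Fden -big_split /=; apply: eq_bigr => j _.
  have zq := Z_gt0 (hY j).
  rewrite /expY -mulrA (powRrM (Z q j)) (powRrM (Z pcrit j)) !powR_mulrn ?ltW //.
  rewrite -powRM ?sqr_ge0 //.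
  by rewrite /y expr_div_n [Z pcrit j ^+ 2 * _]mulrC divfK // sqrf_eq0 gt_eqF.
rewrite -mulrA ler_pM2l ?Fden_gt0 //; last exact: Yc_pcrit_gt0.
have -> : (\sum_j Z q j ^+ 2) / Fnum pcrit = \sum_j dY j / nm1 * y j.
  rewrite Fnum_pcrit mulr_suml; apply: eq_bigr => j _.
  have := Zp j; rewrite /y expr_div_n (Z_sqr pcrit) Yc_vec lam_Ycrit2 => Zp0.
  by field; rewrite !gt_eqF ?nm1_gt0 ?kcrit_gt0 ?dY_gt0.
apply: prod_powR_le_sum => [j||j].
- by rewrite divr_ge0 // ltW ?dY_gt0 ?nm1_gt0.
- by rewrite -mulr_suml -/nm1 divff // gt_eqF ?nm1_gt0.
- by apply/exprn_gt0/divr_gt0; [exact/Z_gt0/hY | exact: Zp].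
Qed.

Lemma Ffun_pcrit_le (q : V) : Dset d lam q -> Ffun d lam pcrit <= Ffun d lam q.
Proof.
move=> hq; have [_ _ hY _] := hq.
have Np0 : 0 < Fnum pcrit by rewrite Fnum_pcrit mulr_gt0 ?kcrit_gt0 ?nm1_gt0.
have Pp0 : 0 < Fden pcrit by exact/Fden_gt0/Yc_pcrit_gt0.
have Pq0 := Fden_gt0 hY.
have hP := Fden_le hY; have hS := sum_Z2_le_Fnum hq.
rewrite !FfunE ler_pdivrMr // mulrAC ler_pdivlMr //.
apply: le_trans (_ : Fnum pcrit * (Fden pcrit * (\sum_j Z q j ^+ 2) / Fnum pcrit) <= _).
  by rewrite ler_pM2l.
by rewrite mulrC divfK ?gt_eqF // mulrC ler_pM2r.
Qed.

End CriticalPoint.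

Theorem lemma4p4 (R : realType) (r : nat) (d : nat -> nat) (lam : nat -> R)
  (hr : (2 <= r)%N) (hd1 : d 1%N = 1%N) (hl1 : lam 1%N = 0)
  (hd : forall i : nat, (2 <= i <= r)%N -> (2 <= d i)%N)
  (hl : forall i : nat, (2 <= i <= r)%N -> 0 < lam i) :
  exists p : 'rV[R]_(r + r.-1),
    [/\ crit_on_D d lam p,
        (forall q : 'rV[R]_(r + r.-1), crit_on_D d lam q -> q = p)
      & (forall q : 'rV[R]_(r + r.-1), Dset d lam q -> Ffun d lam p <= Ffun d lam q)].
Proof.
case: r hr hd hl => [//|[//|r]] _ hd hl.
exists (pcrit r d lam); split.
- exact: crit_on_D_pcrit.
- by move=> q /(crit_on_D_eq_pcrit hd1 hd hl).
- by move=> q /(Ffun_pcrit_le hd1 hd hl).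
Qed.
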